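(* Assume the capacities satisfy (C1)–(C3). Let $\{\overline Z_t\}_{t\ge0}$ be the generation sizes of the NR-process defined below, and let $\{\mathcal N_t\}_{t\ge0}$ be the reachable sets of a uniformly chosen node $A$ in the Poissonian random graph $G_N$. For $\eta,\delta\in(-1/2,1/2)$ and all $t\le(1/2+\eta)\log_\nu N$, $$\mathbb P\Big(\sum_{k=0}^t\overline Z_k>N^{1/2+\delta}\Big)=O\big((\log_\nu N)N^{-(\delta-\eta)}\big)\quad\text{and}\quad\mathbb P\big(|\mathcal N_t|>N^{1/2+\delta}\big)=O\big((\log_\nu N)N^{-(\delta-\eta)}\big).$$
   Context: Capacities $\lambda_1,\dots,\lambda_N>0$ deterministic; $l_N=\sum_i\lambda_i$, $\mu_N=\frac1N\sum_i\lambda_i$, $\nu_N=\sum_i\lambda_i^2/\sum_i\lambda_i$, $f^{(N)}_n=\frac1N\sum_i e^{-\lambda_i}\frac{\lambda_i^n}{n!}$, $g^{(N)}_n=\frac{1}{N\mu_N}\sum_i e^{-\lambda_i}\frac{\lambda_i^{n+1}}{n!}$; $d_{TV}(p,q)=\frac12\sum_j|p_j-q_j|$. (C1): there are $\mu\in(0,\infty)$, $\nu\in(1,\infty)$, $\alpha_1>0$ with $|\mu_N-\mu|,|\nu_N-\nu|=O(N^{-\alpha_1})$. (C2): there are $N$-independent sequences $f,g$ and $\alpha_2>0$ with $d_{TV}(f^{(N)},f),d_{TV}(g^{(N)},g)=O(N^{-\alpha_2})$. (C3): there is $\tau>3$ such that for every $\varepsilon>0$ (with $\gamma:=\frac1{\tau-1}+\varepsilon<\frac12$),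 $\limsup_N\frac1N\sum_i\lambda_i^{\tau-1-\varepsilon}<\infty$ and $\max_i\lambda_i\le N^\gamma$. NR-process: marked branching process with $\overline Z_0=1$, root mark uniform on $\{1,\dots,N\}$; an individual with mark $m$ has, independently for each $i\in\{1,\dots,N\}$, a Poisson$(\lambda_i\lambda_m/l_N)$ number of children with mark $i$, independently over individuals; $\overline Z_t$ is the size of generation $t$. Poissonian random graph: independent Poisson$(\lambda_i\lambda_j/l_N)$ numbers of edges between distinct nodes $i,j$; $\mathcal N_t=\{j: d(A,j)\le t\}$ with $d$ the graph distance. *)

From HB Require Import structures.
From mathcomp Require Import all_boot all_order all_algebra.
From mathcomp Require Import all_classical all_reals all_analysis.
Set Implicit Arguments.
Unset Strict Implicit.
Unset Printing Implicit Defensive.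
Import Order.TTheory GRing.Theory Num.Theory.
Local Open Scope ring_scope.

Section Defs.
Variable R : realType.
(* capacities of the N-th model: lam N i, i in 'I_N = {0,...,N-1} *)
Variable lam : forall N : nat, 'I_N -> R.

Definition lN (N : nat) : R := \sum_(i < N) lam i.
Definition muN (N : nat) : R := N%:R^-1 * \sum_(i < N) lam i.
Definition nuN (N : nat) : R := (\sum_(i < N) lam i ^+ 2) / lN N.
Definition fN (N : nat) (n : nat) : R :=
  N%:R^-1 * \sum_(i < N) expR (- lam i) * lam i ^+ n / n`!%:R.
Definition gN (N : nat) (n : nat) : R :=
  (N%:R * muN N)^-1 * \sum_(i < N) expR (- lam i) * lam i ^+ n.+1 / n`!%:R.

Definition logb (b x : R) : R := ln x / ln b.

(* Given the current generation, listed as the sequence s of marks of its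
   individuals, the offspring is described by X (j, i) = number of children
   of mark i of the j-th individual; these are independent
   Poisson(lam_i lam_{s_j} / l_N) variables. *)
Definition nr_weight (N : nat) (s : seq 'I_N)
    (X : {ffun 'I_(size s) * 'I_N -> nat}) : R :=
  \prod_(j < size s) \prod_(i < N)
     poisson_pmf (lam i * lam (tnth (in_tuple s) j) / lN N) (X (j, i)).

Definition nr_children (N : nat) (s : seq 'I_N)
    (X : {ffun 'I_(size s) * 'I_N -> nat}) : seq 'I_N :=
  flatten [seq flatten [seq nseq (X (j, i)) i | i <- enum 'I_N]
          | j <- enum 'I_(size s)].

(* nr_tail N M k acc s = P( acc + sum_{u=0}^{k} Z'_u > M ) where Z'_u are the
   generation sizes of the NR-process started from a generation with marks s
   (so Z'_0 = size s). *)
Fixpoint nr_tail (N : nat) (M : R) (k : nat) (acc : nat) (s : seq 'I_N)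
    {struct k} : \bar R :=
  match k with
  | 0 => if M < (acc + size s)%:R then 1%E else 0%E
  | k'.+1 => \esum_(X in [set: {ffun 'I_(size s) * 'I_N -> nat}])
               ((nr_weight X)%:E * @nr_tail N M k' (acc + size s) (nr_children X))%E
  end.

(* P( sum_{k=0}^t Zbar_k > M ), root mark uniform on the N nodes *)
Definition nr_prob (N t : nat) (M : R) : \bar R :=
  \sum_(m < N) ((N%:R^-1)%:E * @nr_tail N M t 0 [:: m])%E.

(* multigraph: E (i, j) = number of edges between i and j, only used for
   i < j; independent Poisson(lam_i lam_j / l_N) numbers. *)
Definition pg_weight (N : nat) (E : {ffun 'I_N * 'I_N -> nat}) : R :=
  \prod_(p : 'I_N * 'I_N)
    (if (p.1 < p.2)%N then poisson_pmf (lam p.1 * lam p.2 / lN N) (E p)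
     else if E p == 0%N then 1 else 0).

Definition pg_adj (N : nat) (E : {ffun 'I_N * 'I_N -> nat}) (i j : 'I_N) : bool :=
  ((i < j)%N && (0 < E (i, j))%N) || ((j < i)%N && (0 < E (j, i))%N).

Fixpoint ball (N : nat) (E : {ffun 'I_N * 'I_N -> nat}) (A : 'I_N) (t : nat)
    : {set 'I_N} :=
  match t with
  | 0 => [set A]
  | t'.+1 => ball E A t' :|: [set j | [exists i in ball E A t', pg_adj E i j]]
  end.

(* P( |N_t| > M ), A uniform on the N nodes *)
Definition pg_prob (N t : nat) (M : R) : \bar R :=
  \sum_(A < N) ((N%:R^-1)%:E *
    \esum_(E in [set: {ffun 'I_N * 'I_N -> nat}])
       ((pg_weight E)%:E * (if (M < #|ball E A t|%:R)%R then 1 else 0)%E))%E.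

End Defs.

Definition dTV (R : realType) (p q : nat -> R) : \bar R :=
  ((2^-1 : R)%:E * \esum_(j in [set: nat]) (`|p j - q j|)%:E)%E.

From Pilot Require Import Defs.
From HB Require Import structures.
From mathcomp Require Import all_boot all_order all_algebra.
From mathcomp Require Import all_classical all_reals all_analysis.
Import Order.TTheory GRing.Theory Num.Theory.
Local Open Scope ring_scope.
From mathcomp Require Import ring lra.

(* Both bounds are Markov's inequality for a first moment.  Let
   c_t = sum_(k < t) nu_N^k.  A mark-i individual has on average
   lam_i lam_j / l_N children of mark j, so an individual of mark i has at
   most 1 + c_t lam_i expected descendants (itself included) within t
   generations, and averaging over the root gives
   E[sum_(k <= t) Z_k] <= 1 + c_t mu_N.  In the graph, every vertex of N_t
   ends a self-avoiding path of length at most t from A; such a path is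
   present with probability at most the product of its edge rates
   lam_u lam_v / l_N, and the paths of length k >= 1 from A carry total rate
   lam_A nu_N^(k-1), so E|N_t| <= 1 + c_t mu_N as well.  Finally (C1) gives
   nu_N^t <= nu^t exp(t C N^-alpha1) = O(N^(1/2 + eta)) for
   t <= (1/2 + eta) log_nu N, because N^-alpha1 log N is bounded; hence
   c_t = O(log_nu N * N^(1/2 + eta)). *)

Section PoissonPartialSums.
Context {R : realType}.

Lemma expR_partial_sum_le (x : R) n : 0 <= x ->
  \sum_(k < n) x ^+ k / k`!%:R <= expR x.
Proof.
move=> x_ge0; have incr : nondecreasing_seq (series (exp_coeff x)).
  rewrite seriesEnat; apply: (@nondecreasing_series _ _ xpredT 0) => k _ _.
  by rewrite /exp_coeff /= divr_ge0 // exprn_ge0.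
have := nondecreasing_cvgn_le incr (is_cvg_series_exp_coeff x) n.
by rewrite /expR seriesEord /=.
Qed.

Lemma poisson_pmf_partial_sum_le1 (r : R) n : 0 < r ->
  \sum_(k < n) poisson_pmf r k <= 1.
Proof.
move=> r_gt0; rewrite /poisson_pmf r_gt0 -big_distrl /= -[leRHS](expRxMexpNx_1 r).
by rewrite ler_wpM2r ?expR_ge0 // expR_partial_sum_le // ltW.
Qed.

Lemma poisson_pmf_partial_mean_le (r : R) n : 0 < r ->
  \sum_(k < n) k%:R * poisson_pmf r k <= r.
Proof.
move=> r_gt0; case: n => [|n]; first by rewrite big_ord0 ltW.
rewrite big_ord_recl mul0r add0r.
have shift k : k.+1%:R * poisson_pmf r k.+1 = r * poisson_pmf r k.
  rewrite /poisson_pmf r_gt0 factS natrM exprS invfM.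
  by field; rewrite addrC natr1 !pnatr_eq0 -lt0n fact_gt0.
under eq_bigr do rewrite lift0 shift.
rewrite -mulr_sumr -[leRHS]mulr1 ler_wpM2l ?(ltW r_gt0) //.
exact: poisson_pmf_partial_sum_le1.
Qed.

End PoissonPartialSums.

Lemma big_pairE (R : Type) (idx : R) (op : Monoid.com_law idx) (I J : finType)
    (F : I * J -> R) :
  \big[op/idx]_q F q = \big[op/idx]_i \big[op/idx]_j F (i, j).
Proof. by rewrite pair_bigA; apply: eq_bigr => -[]. Qed.

(* The configurations in [s] are distinct, so after truncating their values
   they form part of the full expansion of the product of partial sums. *)
Lemma sum_prod_ffun_le {R : numDomainType} {I : finType} (h : I -> nat -> R)
    (b : I -> R) (s : seq {ffun I -> nat}) :
  (forall i k, 0 <= h i k) -> (forall i n, \sum_(k < n) h i k <= b i) ->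
  uniq s -> \sum_(X <- s) \prod_i h i (X i) <= \prod_i b i.
Proof.
move=> h_ge0 h_le s_uniq; pose m := \max_(X <- s) \max_i X i.
have X_lt X i : X \in s -> (X i < m.+1)%N.
  move=> Xs; rewrite ltnS (leq_trans (leq_bigmax (F := X) i)) //.
  by rewrite /m (big_rem _ Xs) leq_maxl.
pose cut (X : {ffun I -> nat}) : {ffun I -> 'I_m.+1} := [ffun i => inord (X i)].
have cutK X i : X \in s -> (cut X i : nat) = X i by move=> Xs; rewrite ffunE inordK ?X_lt.
have -> : \sum_(X <- s) \prod_i h i (X i) = \sum_(Y <- map cut s) \prod_i h i (Y i).
  rewrite big_map; apply: eq_big_seq => X Xs.
  by apply: eq_bigr => i _; rewrite cutK.
have cut_uniq : uniq (map cut s).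
  rewrite map_inj_in_uniq // => X Y Xs Ys eXY; apply/ffunP => i.
  by rewrite -cutK // eXY cutK.
rewrite big_uniq //=; apply: (@le_trans _ _ (\sum_(Y : {ffun I -> 'I_m.+1}) \prod_i h i (Y i))).
- rewrite [leRHS](bigID (mem (map cut s))) /= lerDl.
  by apply: sumr_ge0 => Y _; apply: prodr_ge0.
- rewrite -(bigA_distr_bigA (fun i (k : 'I_m.+1) => h i k)) /=.
  by apply: ler_prod => i _; rewrite sumr_ge0 // h_le.
Qed.

Lemma esumT_le (R : realType) (T : choiceType) (a : T -> \bar R) (b : \bar R) :
  (forall s : seq T, uniq s -> (\sum_(x <- s) a x <= b)%E) ->
  (\esum_(x in [set: T]) a x <= b)%E.
Proof.
move=> sum_le; apply: ge_ereal_sup => _ [A [finA _] <-].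
by rewrite fsbig_finite //; apply: sum_le; exact: finmap.fset_uniq.
Qed.

Definition nuN_geom {R : realType} (lam : forall N : nat, 'I_N -> R) (N k : nat) : R :=
  \sum_(i < k) nuN lam N ^+ i.

Section ExpectedSizes.
Context {R : realType} {lam : forall N : nat, 'I_N -> R} {N : nat}.
Hypothesis lam_gt0 : forall i : 'I_N, 0 < lam N i.
Hypothesis N_gt0 : (0 < N)%N.

Lemma lN_gt0 : 0 < lN lam N.
Proof.
pose i0 : 'I_N := Ordinal N_gt0.
rewrite /lN (bigD1 i0) //= ltr_pwDl ?lam_gt0 // sumr_ge0 // => i _.
exact: ltW.
Qed.

Lemma nuN_ge0 : 0 <= nuN lam N.
Proof. by rewrite /nuN divr_ge0 ?(ltW lN_gt0) // sumr_ge0 // => i _; rewrite sqr_ge0. Qed.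

Lemma muN_ge0 : 0 <= muN lam N.
Proof. by rewrite /muN mulr_ge0 ?invr_ge0 // sumr_ge0 // => i _; rewrite ltW. Qed.

Lemma nuN_geom_ge0 k : 0 <= nuN_geom lam N k.
Proof. by apply: sumr_ge0 => i _; rewrite exprn_ge0 // nuN_ge0. Qed.

Lemma nuN_geomS k : nuN_geom lam N k.+1 = 1 + nuN_geom lam N k * nuN lam N.
Proof.
rewrite /nuN_geom big_ord_recl expr0 mulr_suml.
by congr (_ + _); apply: eq_bigr => i _; rewrite exprSr.
Qed.

Definition capacity_sum (s : seq 'I_N) : R := \sum_(x <- s) lam N x.

Definition offspring_rate {s : seq 'I_N} (q : 'I_(size s) * 'I_N) : R :=
  lam N q.2 * lam N (tnth (in_tuple s) q.1) / lN lam N.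

Lemma offspring_rate_gt0 s (q : 'I_(size s) * 'I_N) : 0 < offspring_rate q.
Proof. by rewrite /offspring_rate divr_gt0 ?lN_gt0 // mulr_gt0. Qed.

Lemma sum_offspring_rate s (g : 'I_N -> R) :
  \sum_(q : 'I_(size s) * 'I_N) offspring_rate q * g q.2 =
  capacity_sum s * (\sum_i lam N i * g i) / lN lam N.
Proof.
rewrite big_pairE /capacity_sum [\sum_(x <- s) _]big_tnth !mulr_suml.
apply: eq_bigr => j _; rewrite mulr_sumr mulr_suml; apply: eq_bigr => i _ /=.
by rewrite /offspring_rate /=; field; rewrite gt_eqF ?lN_gt0.
Qed.

Lemma sum_nr_children (phi : 'I_N -> R) s (X : {ffun 'I_(size s) * 'I_N -> nat}) :
  \sum_(x <- nr_children X) phi x = \sum_q (X q)%:R * phi q.2.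
Proof.
rewrite /nr_children big_flatten big_map big_enum big_pairE /=.
apply: eq_bigr => j _; rewrite big_flatten big_map big_enum /=.
by apply: eq_bigr => i _; rewrite big_nseq iter_addr_0 mulr_natl.
Qed.

Lemma nr_weightE s (X : {ffun 'I_(size s) * 'I_N -> nat}) :
  nr_weight lam X = \prod_q poisson_pmf (offspring_rate q) (X q).
Proof. by rewrite /nr_weight big_pairE. Qed.

Lemma nr_weight_ge0 s (X : {ffun 'I_(size s) * 'I_N -> nat}) : 0 <= nr_weight lam X.
Proof. by rewrite nr_weightE prodr_ge0 // => q _; apply: poisson_pmf_ge0. Qed.

Lemma sum_nr_weight_le1 s (t : seq {ffun 'I_(size s) * 'I_N -> nat}) :
  uniq t -> \sum_(X <- t) nr_weight lam X <= 1.
Proof.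
move=> t_uniq; under eq_bigr do rewrite nr_weightE.
have := sum_prod_ffun_le (fun q => poisson_pmf (offspring_rate q)) (fun=> 1) t.
rewrite big1_eq; apply=> // q n; first exact: poisson_pmf_ge0.
exact/poisson_pmf_partial_sum_le1/offspring_rate_gt0.
Qed.

Lemma sum_nr_weight_mean_le s (t : seq {ffun 'I_(size s) * 'I_N -> nat}) p :
  uniq t -> \sum_(X <- t) nr_weight lam X * (X p)%:R <= offspring_rate p.
Proof.
move=> t_uniq; pose h q k := (if q == p then k%:R else 1) * poisson_pmf (offspring_rate q) k.
have -> : offspring_rate p = \prod_q (if q == p then offspring_rate q else 1).
  by rewrite (bigD1 p) //= eqxx big1 ?mulr1 // => q /negPf ->.
have hE (X : {ffun 'I_(size s) * 'I_N -> nat}) : nr_weight lam X * (X p)%:R = \prod_q h q (X q).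
  rewrite nr_weightE big_split /= mulrC; congr (_ * _).
  by rewrite (bigD1 p) //= eqxx big1 ?mulr1 // => q /negPf ->.
rewrite (eq_bigr _ (fun X _ => hE X)).
apply: sum_prod_ffun_le => // [q k | q n].
  by rewrite mulr_ge0 ?poisson_pmf_ge0 //; case: ifP.
rewrite /h; case: ifP => _; first exact/poisson_pmf_partial_mean_le/offspring_rate_gt0.
by under eq_bigr do rewrite mul1r; exact/poisson_pmf_partial_sum_le1/offspring_rate_gt0.
Qed.

Lemma sum_nr_weight_linear_le s (t : seq {ffun 'I_(size s) * 'I_N -> nat})
    (a : R) (g : 'I_N -> R) :
  uniq t -> 0 <= a -> (forall i, 0 <= g i) ->
  \sum_(X <- t) nr_weight lam X * (a + \sum_(x <- nr_children X) g x) <=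
  a + \sum_(q : 'I_(size s) * 'I_N) offspring_rate q * g q.2.
Proof.
move=> t_uniq a_ge0 g_ge0.
under eq_bigr do rewrite sum_nr_children mulrDr mulr_sumr.
rewrite big_split exchange_big /= -mulr_suml; apply: lerD.
  by rewrite -[leRHS]mulr1 mulrC ler_wpM2l // sum_nr_weight_le1.
apply: ler_sum => q _; under eq_bigr do rewrite mulrA.
by rewrite -mulr_suml ler_wpM2r // sum_nr_weight_mean_le.
Qed.

Lemma nr_tail_le M k acc s : 0 < M ->
  (nr_tail lam M k acc s <=
     (((acc + size s)%:R + nuN_geom lam N k * capacity_sum s) / M)%:E)%E.
Proof.
move=> M_gt0; elim: k acc s => [|k IHk] acc s /=.
  rewrite /nuN_geom big_ord0 mul0r addr0; case: ifP => [lt_M|_]; rewrite lee_fin.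
    by rewrite ler_pdivlMr // mul1r ltW.
  by rewrite divr_ge0 // ltW.
set a := (acc + size s)%N; set g := fun i => 1 + nuN_geom lam N k * lam N i.
have g_ge0 i : 0 <= g i by rewrite addr_ge0 // mulr_ge0 ?nuN_geom_ge0 // ltW.
apply: esumT_le => t t_uniq.
apply: (@le_trans _ _ (\sum_(X <- t) (nr_weight lam X *
                          ((a%:R + \sum_(x <- nr_children X) g x) / M))%:E)%E).
  apply: lee_sum => X _; rewrite EFinM lee_wpmul2l ?lee_fin ?nr_weight_ge0 //.
  rewrite (le_trans (IHk _ _)) // lee_fin ler_pM2r ?invr_gt0 // natrD -addrA.
  by rewrite /capacity_sum -sum1_size natr_sum mulr_sumr -big_split.
rewrite sumEFin lee_fin; under eq_bigr do rewrite mulrA.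
rewrite -mulr_suml ler_pM2r ?invr_gt0 //.
rewrite (le_trans (sum_nr_weight_linear_le _ _ a%:R g t_uniq (ler0n _ _) g_ge0)) //.
rewrite sum_offspring_rate lerD2l nuN_geomS /nuN.
suff -> : \sum_i lam N i * g i = lN lam N + nuN_geom lam N k * \sum_(i < N) lam N i ^+ 2.
  by rewrite le_eqVlt; apply/orP; left; apply/eqP; field; exact: lt0r_neq0 lN_gt0.
by rewrite /lN mulr_sumr -big_split; apply: eq_bigr => i _; rewrite /g /=; ring.
Qed.

Lemma uniform_average_le (F : 'I_N -> \bar R) (c M : R) :
  (forall m, (F m <= ((1 + c * lam N m) / M)%:E)%E) ->
  (\sum_(m < N) ((N%:R^-1)%:E * F m) <= ((1 + c * muN lam N) / M)%:E)%E.
Proof.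
move=> F_le; apply: le_trans (_ : \sum_(m < N) (N%:R^-1 * ((1 + c * lam N m) / M))%:E <= _)%E.
  by apply: lee_sum => m _; rewrite EFinM lee_wpmul2l // lee_fin invr_ge0.
rewrite sumEFin lee_fin le_eqVlt; apply/orP; left; apply/eqP.
under eq_bigr do rewrite mulrA; rewrite -mulr_suml; congr (_ / M).
rewrite /muN -mulr_sumr big_split /= -mulr_sumr sumr_const card_ord.
by field; rewrite pnatr_eq0 -lt0n N_gt0.
Qed.

Lemma nr_prob_le t M : 0 < M ->
  (nr_prob lam N t M <= ((1 + nuN_geom lam N t * muN lam N) / M)%:E)%E.
Proof.
move=> M_gt0; apply: uniform_average_le => m.
by rewrite (le_trans (nr_tail_le _ _ _ _ M_gt0)) // /capacity_sum big_seq1.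
Qed.

Definition edge_rate (u v : 'I_N) : R := lam N u * lam N v / lN lam N.

Lemma edge_rate_gt0 u v : 0 < edge_rate u v.
Proof. by rewrite /edge_rate divr_gt0 ?lN_gt0 // mulr_gt0. Qed.

Fixpoint path_rate (a : 'I_N) (p : seq 'I_N) : R :=
  if p is x :: q then edge_rate a x * path_rate x q else 1.

Lemma path_rate_ge0 a p : 0 <= path_rate a p.
Proof.
by elim: p a => [|x q IHq] a //=; rewrite mulr_ge0 // ltW // edge_rate_gt0.
Qed.

Fixpoint sum_seqs (k : nat) (F : seq 'I_N -> R) : R :=
  if k is k'.+1 then \sum_(x : 'I_N) sum_seqs k' (fun q => F (x :: q)) else F [::].

Lemma sum_seqs_ge0 k F : (forall p, 0 <= F p) -> 0 <= sum_seqs k F.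
Proof. by elim: k F => [|k IHk] F F_ge0 //=; apply: sumr_ge0 => x _; apply: IHk. Qed.

Lemma ler_sum_seqs k F G : (forall p, F p <= G p) -> sum_seqs k F <= sum_seqs k G.
Proof. by elim: k F G => [|k IHk] F G FG //=; apply: ler_sum => x _; apply: IHk. Qed.

Lemma sum_seqs_sum (I : Type) (r : seq I) k (F : I -> seq 'I_N -> R) :
  sum_seqs k (fun p => \sum_(i <- r) F i p) = \sum_(i <- r) sum_seqs k (F i).
Proof.
elim: k F => [|k IHk] F //=; rewrite exchange_big /=.
by apply: eq_bigr => x _; exact: (IHk (fun i q => F i (x :: q))).
Qed.

Lemma sum_seqsZ k c F : sum_seqs k (fun p => c * F p) = c * sum_seqs k F.
Proof.
elim: k F => [|k IHk] F //=; rewrite mulr_sumr.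
by apply: eq_bigr => x _; exact: (IHk (fun q => F (x :: q))).
Qed.

Lemma ler_sum_seqs_term k F p : (forall q, 0 <= F q) -> size p = k -> F p <= sum_seqs k F.
Proof.
elim: k F p => [|k IHk] F [|x p] F_ge0 //= [size_p].
rewrite (bigD1 x) //= ler_wpDr ?IHk //.
by apply: sumr_ge0 => y _; apply: sum_seqs_ge0.
Qed.

Lemma sum_seqs_path_rate k a : sum_seqs k.+1 (path_rate a) = lam N a * nuN lam N ^+ k.
Proof.
elim: k a => [|k IHk] a.
  rewrite /= /edge_rate; under eq_bigr do rewrite mulr1.
  by rewrite -mulr_suml -mulr_sumr /lN; field; rewrite gt_eqF ?lN_gt0.
have -> : sum_seqs k.+2 (path_rate a) = \sum_x edge_rate a x * sum_seqs k.+1 (path_rate x).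
  by apply: eq_bigr => x _; rewrite -sum_seqsZ.
under eq_bigr do rewrite IHk.
rewrite /edge_rate /nuN exprS !mulr_suml mulr_sumr; apply: eq_bigr => x _.
by field; rewrite gt_eqF ?lN_gt0.
Qed.

Lemma sum_path_rate t a :
  \sum_(k < t.+1) sum_seqs k (path_rate a) = 1 + nuN_geom lam N t * lam N a.
Proof.
rewrite big_ord_recl /nuN_geom mulr_suml; congr (_ + _).
by apply: eq_bigr => i _; rewrite lift0 sum_seqs_path_rate mulrC.
Qed.

Definition self_avoiding (E : {ffun 'I_N * 'I_N -> nat}) (A : 'I_N) (p : seq 'I_N) :=
  path (pg_adj E) A p && uniq (A :: p).

Lemma mem_ball_self_avoiding (E : {ffun 'I_N * 'I_N -> nat}) A t j :
  j \in Defs.ball E A t ->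
  exists2 p, self_avoiding E A p & last A p = j /\ (size p <= t)%N.
Proof.
move=> j_ball.
have [p E_p [<- size_p]] : exists2 p, path (pg_adj E) A p & last A p = j /\ (size p <= t)%N.
  elim: t j j_ball => [|t IHt] j /=; first by rewrite inE => /eqP ->; exists [::].
  rewrite inE => /orP [/IHt [p E_p [last_p size_p]] | ].
    by exists p => //; split=> //; apply: leqW.
  rewrite inE => /existsP [i /andP [/IHt [p E_p [last_p size_p]] E_ij]].
  exists (rcons p j); first by rewrite rcons_path E_p last_p.
  by rewrite last_rcons size_rcons ltnS.
case: (shortenP E_p) => p' E_p' p'_uniq p'_sub.
exists p'; first by rewrite /self_avoiding E_p'.
split=> //; apply: leq_trans size_p; apply: uniq_leq_size p'_sub.
by case/andP: p'_uniq.
Qed.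

Lemma card_ball_le (E : {ffun 'I_N * 'I_N -> nat}) A t :
  #|Defs.ball E A t|%:R <= \sum_(k < t.+1) sum_seqs k (fun p => (self_avoiding E A p)%:R).
Proof.
pose ends_at j p : R := (self_avoiding E A p)%:R * (last A p == j)%:R.
have ends_at_ge0 j p : 0 <= ends_at j p by rewrite mulr_ge0.
apply: (@le_trans _ _ (\sum_j \sum_(k < t.+1) sum_seqs k (ends_at j))).
  rewrite -sum1_card natr_sum [leRHS](bigID (mem (Defs.ball E A t))) /= -[leLHS]addr0.
  apply: lerD; last by apply: sumr_ge0 => j _; apply: sumr_ge0 => k _; apply: sum_seqs_ge0.
  apply: ler_sum => j /mem_ball_self_avoiding [p Ap [last_p size_p]].
  rewrite -ltnS in size_p; rewrite (bigD1 (Ordinal size_p)) //= ler_wpDr //.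
    by apply: sumr_ge0 => k _; apply: sum_seqs_ge0.
  rewrite (le_trans _ (ler_sum_seqs_term _ _ _ (ends_at_ge0 j) erefl)) //.
  by rewrite /ends_at Ap last_p eqxx mulr1.
rewrite exchange_big /=; apply: ler_sum => k _.
rewrite -sum_seqs_sum; apply: ler_sum_seqs => p.
rewrite /ends_at -mulr_sumr (bigD1 (last A p)) //= eqxx big1 ?addr0 ?mulr1 //.
by move=> j; rewrite eq_sym => /negPf ->.
Qed.

Definition edge_key (a x : 'I_N) : 'I_N * 'I_N := if (a < x)%N then (a, x) else (x, a).

Fixpoint path_edges (a : 'I_N) (p : seq 'I_N) : seq ('I_N * 'I_N) :=
  if p is x :: q then edge_key a x :: path_edges x q else [::].

Lemma mem_path_edges x q e :
  e \in path_edges x q -> (e.1 \in x :: q) && (e.2 \in x :: q).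
Proof.
elim: q x => [|y q IHq] x //=; rewrite inE => /orP [/eqP -> | /IHq].
  by rewrite /edge_key; case: ifP => _ /=; rewrite !in_cons !eqxx ?orbT.
by rewrite !inE => /andP [-> ->]; rewrite !orbT.
Qed.

Lemma path_edges_uniq a p : uniq (a :: p) -> uniq (path_edges a p).
Proof.
elim: p a => [|x q IHq] a //= /andP [a_notin xq_uniq].
rewrite IHq // andbT; apply: contra a_notin => /mem_path_edges.
by rewrite /edge_key; case: ifP => _ /andP [].
Qed.

Lemma path_edges_lt {a p e} : uniq (a :: p) -> e \in path_edges a p -> (e.1 < e.2)%N.
Proof.
elim: p a => [|x q IHq] a //= /andP [a_notin xq_uniq].
rewrite inE => /orP [/eqP -> | /(IHq _ xq_uniq) //].
have ax_neq : a != x by apply: contraNneq a_notin => ->; rewrite mem_head.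
rewrite /edge_key; case: ifP => //= /negbT; rewrite -leqNgt leq_eqVlt.
by case/orP=> // /eqP x_a; case/eqP: ax_neq; apply: val_inj.
Qed.

Lemma path_edges_gt0 {E : {ffun 'I_N * 'I_N -> nat}} {a p e} :
  path (pg_adj E) a p -> e \in path_edges a p -> (0 < E e)%N.
Proof.
elim: p a => [|x q IHq] a //= /andP [E_ax E_q].
rewrite inE => /orP [/eqP -> | /(IHq _ E_q) //].
by move: E_ax; rewrite /pg_adj /edge_key; case: ltngtP; rewrite ?orbF.
Qed.

Lemma prod_path_edges a p : \prod_(e <- path_edges a p) edge_rate e.1 e.2 = path_rate a p.
Proof.
elim: p a => [|x q IHq] a /=; first by rewrite big_nil.
rewrite big_cons IHq /edge_key; case: ifP => //= _.
by rewrite /edge_rate [lam N x * _]mulrC.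
Qed.

Definition pg_factor (q : 'I_N * 'I_N) (n : nat) : R :=
  if (q.1 < q.2)%N then poisson_pmf (edge_rate q.1 q.2) n
  else if n == 0%N then 1 else 0.

Lemma pg_weightE (E : {ffun 'I_N * 'I_N -> nat}) :
  pg_weight lam E = \prod_q pg_factor q (E q).
Proof. by []. Qed.

Lemma pg_factor_ge0 q n : 0 <= pg_factor q n.
Proof. by rewrite /pg_factor; case: ifP => _; [apply: poisson_pmf_ge0 | case: ifP]. Qed.

Lemma pg_weight_ge0 (E : {ffun 'I_N * 'I_N -> nat}) : 0 <= pg_weight lam E.
Proof. by rewrite pg_weightE prodr_ge0 // => q _; apply: pg_factor_ge0. Qed.

(* The edges of a self-avoiding path are distinct pairs [u < v], so the
   probability that all of them are present factorises, and each factor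
   P(E_e > 0) is at most E[E_e] = edge_rate. *)
Lemma sum_pg_weight_self_avoiding_le A p (s : seq {ffun 'I_N * 'I_N -> nat}) :
  uniq s -> \sum_(E <- s) pg_weight lam E * (self_avoiding E A p)%:R <= path_rate A p.
Proof.
move=> s_uniq; case Ap_uniq: (uniq (A :: p)); last first.
  by rewrite big1 ?path_rate_ge0 // => E _; rewrite /self_avoiding Ap_uniq andbF mulr0.
set S := path_edges A p.
pose h q n := if q \in S then (0 < n)%N%:R * pg_factor q n else pg_factor q n.
have h_ge0 q n : 0 <= h q n by rewrite /h; case: ifP; rewrite ?mulr_ge0 ?pg_factor_ge0.
apply: (@le_trans _ _ (\sum_(E <- s) \prod_q h q (E q))).
  apply: ler_sum => E _; rewrite /self_avoiding Ap_uniq andbT.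
  case E_p: (path _ A p); last by rewrite mulr0 prodr_ge0.
  rewrite mulr1 pg_weightE; apply: ler_prod => q _; rewrite pg_factor_ge0 /h.
  by case: ifP => [/(path_edges_gt0 E_p) ->|_]; rewrite ?mul1r lexx.
apply: (@le_trans _ _ (\prod_q (if q \in S then edge_rate q.1 q.2 else 1))).
  apply: sum_prod_ffun_le => // q n; rewrite /h; case: ifP => q_S.
    rewrite /pg_factor (path_edges_lt Ap_uniq q_S).
    apply: le_trans (poisson_pmf_partial_mean_le _ n (edge_rate_gt0 q.1 q.2)).
    apply: ler_sum => k _; apply: ler_wpM2r; first exact: poisson_pmf_ge0.
    by rewrite ler_nat; case: (k : nat).
  rewrite /pg_factor; case: (q.1 < q.2)%N.
    exact: poisson_pmf_partial_sum_le1 (edge_rate_gt0 _ _).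
  by case: n => [|n]; rewrite ?big_ord0 // big_ord_recl big1 ?addr0.
by rewrite -big_mkcond /= -big_uniq ?path_edges_uniq // prod_path_edges.
Qed.

Lemma pg_ball_esum_le t M A : 0 < M ->
  (\esum_(E in [set: {ffun 'I_N * 'I_N -> nat}])
     ((pg_weight lam E)%:E * (if (M < #|Defs.ball E A t|%:R)%R then 1 else 0)%E)
   <= ((1 + nuN_geom lam N t * lam N A) / M)%:E)%E.
Proof.
move=> M_gt0; apply: esumT_le => s s_uniq.
pose paths E := \sum_(k < t.+1) sum_seqs k (fun p => (self_avoiding E A p)%:R).
apply: (@le_trans _ _ (\sum_(E <- s) (pg_weight lam E * (paths E / M))%:E)%E).
  apply: lee_sum => E _; rewrite EFinM lee_wpmul2l ?lee_fin ?pg_weight_ge0 //.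
  have paths_ge0 : 0 <= paths E by apply: sumr_ge0 => k _; apply: sum_seqs_ge0.
  case: ifP => [/ltW M_le|_]; rewrite lee_fin ?divr_ge0 ?(ltW M_gt0) //.
  by rewrite ler_pdivlMr // mul1r (le_trans M_le) ?card_ball_le.
rewrite sumEFin lee_fin; under eq_bigr do rewrite mulrA.
rewrite -mulr_suml ler_pM2r ?invr_gt0 // -sum_path_rate /paths.
under eq_bigr do rewrite mulr_sumr.
rewrite exchange_big /=; apply: ler_sum => k _.
under eq_bigr do rewrite -sum_seqsZ.
rewrite -sum_seqs_sum; apply: ler_sum_seqs => p.
exact: sum_pg_weight_self_avoiding_le.
Qed.

Lemma pg_prob_le t M : 0 < M ->
  (pg_prob lam N t M <= ((1 + nuN_geom lam N t * muN lam N) / M)%:E)%E.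
Proof. by move=> M_gt0; apply: uniform_average_le => A; exact: pg_ball_esum_le. Qed.

End ExpectedSizes.

Section Asymptotics.
Context {R : realType}.

Lemma expr_le_powR_of_logb (nu x theta : R) (t : nat) : 1 < nu -> 0 < x ->
  t%:R <= theta * logb nu x -> nu ^+ t <= x `^ theta.
Proof.
move=> nu_gt1 x_gt0 t_le; have lnnu_gt0 : 0 < ln nu by rewrite ln_gt0.
rewrite -[nu]lnK ?posrE ?(lt_trans ltr01) // -expRM_natl /powR gt_eqF // ler_expR.
by rewrite -ler_pdivlMr // (le_trans t_le) // /logb mulrA.
Qed.

Lemma logb_mul_powRN_le (nu x a c : R) : 1 < nu -> 1 <= x -> 0 < a -> 0 <= c ->
  logb nu x * (c * x `^ (- a)) <= c / (a * ln nu).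
Proof.
move=> nu_gt1 x_ge1 a_gt0 c_ge0; have lnnu_gt0 : 0 < ln nu by rewrite ln_gt0.
have x_gt0 : 0 < x by rewrite (lt_le_trans ltr01).
have xa_gt0 : 0 < x `^ a by rewrite powR_gt0.
have a_lnx_le : a * ln x <= x `^ a by rewrite -ln_powR ltW // ln_sublinear.
rewrite /logb powRN -(ler_pM2r (mulr_gt0 a_gt0 lnnu_gt0)).
have -> : ln x / ln nu * (c * (x `^ a)^-1) * (a * ln nu) = c * (a * ln x / x `^ a).
  by field; rewrite !gt_eqF.
rewrite divfK ?gt_eqF ?mulr_gt0 // -[leRHS]mulr1 ler_wpM2l //.
by rewrite ler_pdivrMr // mul1r.
Qed.

Lemma expr_le_expR_perturbation (y nu e : R) (k t : nat) :
  0 <= y -> y <= nu + e -> 1 <= nu -> 0 <= e -> (k <= t)%N ->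
  y ^+ k <= nu ^+ t * expR (t%:R * e).
Proof.
move=> y_ge0 y_le nu_ge1 e_ge0 k_le_t.
have nu_ge0 : 0 <= nu by rewrite (le_trans ler01).
have nue_ge1 : 1 <= nu + e by rewrite (le_trans nu_ge1) ?lerDl.
apply: (@le_trans _ _ ((nu + e) ^+ t)).
  by rewrite (le_trans (lerXn2r k _ _ y_le)) ?nnegrE ?addr_ge0 // ler_weXn2l.
rewrite expRM_natl -exprMn lerXn2r ?nnegrE ?addr_ge0 ?mulr_ge0 ?expR_ge0 //.
apply: (@le_trans _ _ (nu * (1 + e))); first by rewrite mulrDr mulr1 lerD2l ler_peMl.
by rewrite ler_wpM2l ?expR_ge1Dx.
Qed.

Lemma sum_expr_le_logb (nu x a c theta y : R) (t : nat) :
  1 < nu -> 1 <= x -> 0 < a -> 0 <= c -> 0 <= y -> y <= nu + c * x `^ (- a) ->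
  t%:R <= theta * logb nu x -> t%:R <= logb nu x ->
  \sum_(k < t) y ^+ k <= logb nu x * (x `^ theta * expR (c / (a * ln nu))).
Proof.
move=> nu_gt1 x_ge1 a_gt0 c_ge0 y_ge0 y_le t_le_theta t_le.
have nu_ge0 : 0 <= nu by rewrite ltW // (lt_trans ltr01).
set e := c * x `^ (- a); have e_ge0 : 0 <= e by rewrite mulr_ge0 ?powR_ge0.
apply: (@le_trans _ _ (\sum_(k < t) nu ^+ t * expR (t%:R * e))).
  apply: ler_sum => k _; apply: expr_le_expR_perturbation => //.
  - exact: ltW.
  - exact: ltnW.
rewrite sumr_const card_ord -[X in X <= _]mulr_natl.
rewrite ler_pM ?mulr_ge0 ?expR_ge0 ?exprn_ge0 // ler_pM ?exprn_ge0 ?expR_ge0 //.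
  by rewrite expr_le_powR_of_logb // (lt_le_trans ltr01).
rewrite ler_expR (le_trans _ (logb_mul_powRN_le _ _ _ _ nu_gt1 x_ge1 a_gt0 c_ge0)) //.
by rewrite ler_wpM2r.
Qed.

Lemma markov_ratio_le (nu mu a c eta delta x y m : R) (t : nat) :
  1 < nu -> 0 < a -> 0 <= c -> - 2^-1 < eta < 2^-1 -> nu <= x ->
  0 <= y -> y <= nu + c * x `^ (- a) -> 0 <= m -> m <= mu + c * x `^ (- a) ->
  t%:R <= (2^-1 + eta) * logb nu x ->
  (1 + (\sum_(k < t) y ^+ k) * m) / x `^ (2^-1 + delta) <=
  (1 + expR (c / (a * ln nu)) * (mu + c)) * logb nu x * x `^ (- (delta - eta)).
Proof.
move=> nu_gt1 a_gt0 c_ge0 /andP [eta_gt eta_lt] nu_le_x y_ge0 y_le m_ge0 m_le t_le.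
have x_ge1 : 1 <= x by rewrite (le_trans (ltW nu_gt1)).
have x_gt0 : 0 < x by rewrite (lt_le_trans ltr01).
have m_le_mu_c : m <= mu + c.
  rewrite (le_trans m_le) // lerD2l ler_piMr // -[leRHS](powRr0 x) ler_powR //.
  by rewrite oppr_le0 ltW.
set L := logb nu x; set P := x `^ (2^-1 + eta); set K := expR (c / (a * ln nu)).
have L_ge1 : 1 <= L.
  rewrite /L /logb ler_pdivlMr ?ln_gt0 // mul1r ler_ln ?posrE //.
  by rewrite (lt_trans ltr01).
have P_ge1 : 1 <= P by rewrite /P -[leLHS](powRr0 x) ler_powR //; lra.
have t_le_L : t%:R <= L by rewrite (le_trans t_le) // ler_piMl ?(le_trans ler01) //; lra.
have sum_le : \sum_(k < t) y ^+ k <= L * (P * K) by apply: sum_expr_le_logb.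
have -> : x `^ (- (delta - eta)) = P / x `^ (2^-1 + delta).
  by rewrite /P -powRB ?(gt_eqF x_gt0) ?implybT //; f_equal; lra.
rewrite mulrA ler_pM2r ?invr_gt0 ?powR_gt0 //.
have -> : (1 + K * (mu + c)) * L * P = L * P + L * (P * K) * (mu + c) by ring.
apply: lerD; first exact: mulr_ege1.
by apply: ler_pM => //; apply: sumr_ge0 => k _; apply: exprn_ge0.
Qed.

End Asymptotics.

Lemma ler_addr_dist {R : realDomainType} {u v C e : R} :
  0 <= e -> `|u - v| <= C * e -> u <= v + `|C| * e.
Proof.
move=> e_ge0; rewrite ler_distl => /andP [_ u_le].
by rewrite (le_trans u_le) // lerD2l ler_wpM2r // ler_norm.
Qed.

Theorem lemmaD2 (R : realType) (lam : forall N : nat, 'I_N -> R)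
  (lam_pos : forall (N : nat) (i : 'I_N), 0 < lam N i)
  (mu nu : R) (mu_pos : 0 < mu) (nu_gt1 : 1 < nu)
  (* (C1) *)
  (C1 : exists (alpha1 C : R) (N0 : nat), 0 < alpha1 /\
     forall N : nat, (N0 <= N)%N ->
       `|muN lam N - mu| <= C * N%:R `^ (- alpha1) /\
       `|nuN lam N - nu| <= C * N%:R `^ (- alpha1))
  (* (C2) *)
  (C2 : exists (f g : nat -> R) (alpha2 C : R) (N0 : nat), 0 < alpha2 /\
     forall N : nat, (N0 <= N)%N ->
       (dTV (fN lam N) f <= (C * N%:R `^ (- alpha2))%:E)%E /\
       (dTV (gN lam N) g <= (C * N%:R `^ (- alpha2))%:E)%E)
  (* (C3) *)
  (C3 : exists tau : R, 3 < tau /\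
     forall eps : R, 0 < eps -> (tau - 1)^-1 + eps < 2^-1 ->
       (exists (K : R) (N0 : nat), forall N : nat, (N0 <= N)%N ->
          N%:R^-1 * \sum_(i < N) lam N i `^ (tau - 1 - eps) <= K) /\
       (forall (N : nat) (i : 'I_N), lam N i <= N%:R `^ ((tau - 1)^-1 + eps)))
  (eta delta : R)
  (eta_range : - 2^-1 < eta < 2^-1) (delta_range : - 2^-1 < delta < 2^-1) :
  exists (C : R) (N0 : nat), forall N t : nat, (N0 <= N)%N ->
    t%:R <= (2^-1 + eta) * logb nu N%:R ->
    (nr_prob lam N t (N%:R `^ (2^-1 + delta))
       <= (C * logb nu N%:R * N%:R `^ (- (delta - eta)))%:E)%E /\
    (pg_prob lam N t (N%:R `^ (2^-1 + delta))
       <= (C * logb nu N%:R * N%:R `^ (- (delta - eta)))%:E)%E.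
Proof.
case: C1 => a [C [N0 [a_gt0 C1_N]]].
have [n1 nu_le_n1] : exists n : nat, nu <= n%:R.
  by exists (Num.Def.archi_bound nu); rewrite ltW // archi_boundP // ltW // (lt_trans ltr01).
exists (1 + expR (`|C| / (a * ln nu)) * (mu + `|C|)), (maxn N0 (maxn 1 n1)) => N t.
rewrite !geq_max => /and3P [N0_le N_gt0 n1_le] t_le.
have [muN_close nuN_close] := C1_N N N0_le.
have Na_ge0 : 0 <= N%:R `^ (- a) :> R by rewrite powR_ge0.
have M_gt0 : 0 < N%:R `^ (2^-1 + delta) :> R by rewrite powR_gt0 ?ltr0n.
have ratio_le : (1 + nuN_geom lam N t * muN lam N) / N%:R `^ (2^-1 + delta) <=
    (1 + expR (`|C| / (a * ln nu)) * (mu + `|C|)) * logb nu N%:R * N%:R `^ (- (delta - eta)).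
  apply: markov_ratio_le => //.
  - by rewrite (le_trans nu_le_n1) ?ler_nat.
  - exact: nuN_ge0 (lam_pos N) N_gt0.
  - exact: ler_addr_dist.
  - exact: muN_ge0 (lam_pos N).
  - exact: ler_addr_dist.
split.
- by rewrite (le_trans (nr_prob_le (lam_pos N) N_gt0 t _ M_gt0)) ?lee_fin.
- by rewrite (le_trans (pg_prob_le (lam_pos N) N_gt0 t _ M_gt0)) ?lee_fin.
Qed.
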